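(* In the setting below with $P=\mathfrak A$ and the absolute error criterion, assume $\lambda\in\ell_{\tau_0}$ for some $\tau_0\in(0,\infty)$. Then: (i) if $\lambda_1<1$, $\{S_d\}$ is strongly polynomially tractable, independently of the choice of the sets $I_d$; (ii) if $\lambda_1\ge1$ and there exist $\tau\ge\tau_0$ and $d_0\in\mathbb N$ such that $$\frac{\ln(a_d!)}{d}\ge\ln\big(\|\lambda\|_{\ell_\tau}^\tau\big)\quad\text{for all }d\ge d_0,$$ then $\{S_d\}$ is strongly polynomially tractable.
   Context: Setting: $S_1:H_1\to G_1$ is a compact linear operator between real Hilbert spaces ($H_1$ infinite-dimensional separable); $\lambda=(\lambda_m)_{m\in\mathbb N}$, $\lambda_1\ge\lambda_2\ge\dots\ge0$, are the eigenvalues of $S_1^\dagger S_1$. $S_d=S_1^{\otimes d}:H_1^{\otimes d}\to G_1^{\otimes d}$. For each $d$ fix $\emptyset\ne I_d=\{i_1<\dots<i_{a_d}\}\subset\{1,\dots,d\}$ ($I_1=\{1\}$), put $a_d=\#I_d$, $b_d=d-a_d$, and fix one type $P\in\{\mathfrak S,\mathfrak A\}$ for all $d$; the problem $\{S_d\}$ is the family of restrictions of $S_d$ to the $I_d$-symmetric subspace (if $P=\mathfrak S$) or $I_d$-antisymmetric subspace (if $P=\mathfrak A$) of $H_1^{\otimes d}$, i.e. the range of $\frac1{a_d!}\sum_{\pi}(\pm1)U_\pi$, the sum over permutations $\pi$ of $\{1,\dots,d\}$ fixing all points outside $I_d$, $U_\pi(f_1\otimes\cdots\otimes f_d)=f_{\pi(1)}\otimes\cdots\otimes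 f_{\pi(d)}$, sign $(-1)^{|\pi|}$ used for $\mathfrak A$. Let $\nabla_d=\{k\in\mathbb N^d:k_{i_1}\le\dots\le k_{i_{a_d}}\}$ for $P=\mathfrak S$ and with strict inequalities for $P=\mathfrak A$; $\lambda_{d,k}=\prod_{l=1}^d\lambda_{k_l}$; $\psi:\mathbb N\to\nabla_d$ a bijection with $\lambda_{d,\psi(1)}\ge\lambda_{d,\psi(2)}\ge\cdots$. These are exactly the eigenvalues of $S_d^\dagger S_d$ on the subspace, and the information complexity (absolute error) is $n(\epsilon,d)=\#\{k\in\nabla_d:\lambda_{d,k}>\epsilon^2\}$, the initial error $\epsilon^{\rm init}_d=\sqrt{\lambda_{d,\psi(1)}}$ (equal to $\lambda_1^{d/2}$ if $P=\mathfrak S$, and $\sqrt{\lambda_1^{b_d}\lambda_1\lambda_2\cdots\lambda_{a_d}}$ if $P=\mathfrak A$). Polynomially tractable: $\exists C,p>0,q\ge0$ with $n(\epsilon,d)\le C\epsilon^{-p}d^q$ for all $d\in\mathbb N,\epsilon\in(0,1]$; strongly polynomially tractable: this with $q=0$. Standing assumptions: $\lambda_2>0$ and $\epsilon_d^{\rm init}>0$ for all $d$. $\ell_\tau$: sequences with $\|\lambda\|_{\ell_\tau}^\tau=\sum_m\lambda_m^\tau<\infty$. *)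

From Stdlib Require Import Reals Lra Lia List Arith.
Open Scope R_scope.

(* Conventions (0-based indexing):
   - lam : nat -> R, with lam m = lambda_{m+1}  (so lam 0 = lambda_1).
   - a multi-index k in N^d is a list of naturals of length d, entry k_l
     stored as k_l - 1 (0-based), position l in {0,...,d-1} stands for l+1.
   - the index set I_d subset {1..d} is given by a boolean predicate
     I d : nat -> bool on positions 0..d-1. *)

Definition a_card (I : nat -> nat -> bool) (d : nat) : nat :=
  length (filter (I d) (seq 0 d)).

Definition admissible_I (I : nat -> nat -> bool) : Prop :=
  (forall d, (1 <= d)%nat -> (1 <= a_card I d)%nat) /\ I 1%nat 0%nat = true.

Definition in_nabla_A (I : nat -> nat -> bool) (d : nat) (k : list nat) : Prop :=
  length k = d /\
  forall i j, (i < j)%nat -> (j < d)%nat -> I d i = true -> I d j = true ->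
    (nth i k 0 < nth j k 0)%nat.

Definition lam_dk (lam : nat -> R) (k : list nat) : R :=
  fold_right Rmult 1 (map lam k).

(* "n(eps,d) <= x": the set {k in nabla_d : lambda_{d,k} > eps^2} has at most
   x elements (every finite duplicate-free list of such k has length <= x). *)
Definition info_compl_le (lam : nat -> R) (I : nat -> nat -> bool)
    (eps : R) (d : nat) (x : R) : Prop :=
  forall l : list (list nat), NoDup l ->
    (forall k, In k l -> in_nabla_A I d k /\ lam_dk lam k > eps ^ 2) ->
    INR (length l) <= x.

Definition strongly_poly_tractable (lam : nat -> R) (I : nat -> nat -> bool) : Prop :=
  exists C p : R, 0 < C /\ 0 < p /\
    forall (d : nat) (eps : R), (1 <= d)%nat -> 0 < eps -> eps <= 1 ->
      info_compl_le lam I eps d (C * Rpower eps (- p)).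

Definition rpow (x t : R) : R := if Req_EM_T x 0 then 0 else Rpower x t.

Definition ltau_pow (lam : nat -> R) (tau L : R) : Prop :=
  infinite_sum (fun m => rpow (lam m) tau) L.

Definition in_ltau (lam : nat -> R) (tau : R) : Prop :=
  exists L, ltau_pow lam tau L.

Definition init_err_A (lam : nat -> R) (I : nat -> nat -> bool) (d : nat) : R :=
  sqrt (lam 0%nat ^ (d - a_card I d) *
        fold_right Rmult 1 (map lam (seq 0 (a_card I d)))).

From Stdlib Require Import Reals List Arith Lra Lia.
Open Scope R_scope.

(* Fix tau > 0 and write mu_x = lambda_x^tau.  The heart of the argument is the
   estimate
       sum_{k in nabla_d, k <= N} prod_l mu_{k_l}  <=  K^d / a_d!          ( * )
   whenever every partial sum of mu is at most K: the a_d antisymmetric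
   coordinates range over strictly increasing tuples, and the sum of
   prod mu over strictly increasing a-tuples is at most (sum mu)^a / a!.
   We prove ( * ) by induction along the positions 1..d, coded by a boolean
   mask (true = position in I_d), with a telescoping inequality
       sum_{c <= x < N} mu_x T(x+1)^a <= T(c)^(a+1) / (a+1),
   T(c) the tail sum of mu from c, handling one antisymmetric coordinate.
   Every k with lambda_{d,k} > eps^2 contributes more than eps^(2 tau) to the
   left side of ( * ), so n(eps,d) <= (K^d / a_d!) eps^(-2 tau): strong
   tractability follows once K^d / a_d! is bounded in d.  For (i) a large
   tau makes K <= 1; for (ii) the hypothesis says exactly L^d <= a_d! for
   d >= d0. *)

Definition sumR (f : nat -> R) (xs : list nat) : R := fold_right Rplus 0 (map f xs).

Definition lsum (mu : nat -> R) (l : list (list nat)) : R :=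
  fold_right Rplus 0 (map (lam_dk mu) l).

Lemma sumR_nonneg f xs : (forall x, 0 <= f x) -> 0 <= sumR f xs.
Proof.
  unfold sumR; intros Hf; induction xs as [|x xs IH]; simpl; [lra|].
  specialize (Hf x); lra.
Qed.

Lemma sumR_le f g xs : (forall x, f x <= g x) -> sumR f xs <= sumR g xs.
Proof.
  unfold sumR; intros Hfg; induction xs as [|x xs IH]; simpl; [lra|].
  specialize (Hfg x); lra.
Qed.

Lemma sumR_mult_r f r xs : sumR (fun x => f x * r) xs = sumR f xs * r.
Proof. unfold sumR; induction xs as [|x xs IH]; simpl; [ring|]. rewrite IH; ring. Qed.

Lemma sumR_app f xs ys : sumR f (xs ++ ys) = sumR f xs + sumR f ys.
Proof. unfold sumR; induction xs as [|x xs IH]; simpl; [ring|]. rewrite IH; ring. Qed.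

Definition starts_with (x : nat) (k : list nat) : bool :=
  match k with y :: _ => Nat.eqb y x | nil => false end.

Lemma starts_with_eq x k : starts_with x k = true -> k = x :: tl k.
Proof. destruct k as [|y k]; simpl; [discriminate|]. now intros ->%Nat.eqb_eq. Qed.

Lemma lsum_partition mu p l :
  lsum mu l = lsum mu (filter p l) + lsum mu (filter (fun k => negb (p k)) l).
Proof.
  unfold lsum; induction l as [|k l IH]; simpl; [lra|].
  destruct (p k); simpl; rewrite IH; lra.
Qed.

Lemma lsum_starts_with mu x l :
  lsum mu (filter (starts_with x) l) = mu x * lsum mu (map (@tl nat) (filter (starts_with x) l)).
Proof.
  unfold lsum; induction l as [|[|y k] l IH]; simpl; [ring | exact IH |].
  destruct (Nat.eqb_spec y x) as [->|]; simpl; [|exact IH].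
  rewrite IH; unfold lam_dk; simpl; ring.
Qed.

Lemma NoDup_map_tl x l :
  NoDup l -> (forall k, In k l -> starts_with x k = true) -> NoDup (map (@tl nat) l).
Proof.
  induction l as [|k l IH]; simpl; intros Hnd Hx; [constructor|].
  inversion Hnd as [|? ? Hk Hnd']; subst; constructor; [|auto].
  intros (k' & Htl & Hk')%in_map_iff; apply Hk.
  rewrite (starts_with_eq x k), <- Htl, <- (starts_with_eq x k'); auto.
Qed.

Lemma lsum_split_heads mu (P : nat -> list nat -> Prop) (B : nat -> R) :
  (forall x, 0 <= mu x) ->
  (forall x l', NoDup l' -> (forall k', In k' l' -> P x k') -> lsum mu l' <= B x) ->
  forall xs l, NoDup l ->
  (forall k, In k l -> exists x k', k = x :: k' /\ In x xs /\ P x k') ->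
  lsum mu l <= sumR (fun x => mu x * B x) xs.
Proof.
  intros Hmu HB xs; induction xs as [|x xs IH]; intros l Hnd Hl; simpl.
  - destruct l as [|k l]; [unfold lsum, sumR; simpl; lra|].
    destruct (Hl k (or_introl eq_refl)) as (? & ? & _ & [] & _).
  - rewrite (lsum_partition mu (starts_with x) l); apply Rplus_le_compat.
    + rewrite lsum_starts_with; apply Rmult_le_compat_l; [auto|]. apply HB.
      * apply (NoDup_map_tl x); [now apply NoDup_filter|].
        intros k Hk; apply filter_In in Hk; tauto.
      * intros k' (k & <- & [Hkl Hx]%filter_In)%in_map_iff.
        destruct (Hl k Hkl) as (y & k'' & -> & _ & HP); simpl in Hx |- *.
        now apply Nat.eqb_eq in Hx as ->.
    + apply IH; [now apply NoDup_filter|].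
      intros k [Hkl Hx]%filter_In.
      destruct (Hl k Hkl) as (y & k'' & -> & [<-|Hin] & HP); simpl in Hx.
      * now rewrite Nat.eqb_refl in Hx.
      * eauto.
Qed.

Fixpoint fits (N : nat) (m : list bool) (c : nat) (k : list nat) : Prop :=
  match m, k with
  | nil, nil => True
  | b :: m', x :: k' =>
      (x < N)%nat /\ (if b then (c <= x)%nat /\ fits N m' (S x) k' else fits N m' c k')
  | _, _ => False
  end.

Definition n_marked (m : list bool) : nat := length (filter (fun b : bool => b) m).

Lemma n_marked_le m : (n_marked m <= length m)%nat.
Proof. apply filter_length_le. Qed.

Definition tail_sum (mu : nat -> R) (N c : nat) : R := sumR mu (seq c (N - c)).

Lemma tail_sum_step mu N c : (c < N)%nat -> tail_sum mu N c = mu c + tail_sum mu N (S c).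
Proof. intros Hc; unfold tail_sum; replace (N - c)%nat with (S (N - S c)) by lia; reflexivity. Qed.

Lemma pow_add_lower s u n :
  0 <= s -> 0 <= u -> s ^ S n + INR (S n) * u * s ^ n <= (s + u) ^ S n.
Proof.
  intros Hs Hu; induction n as [|n IH]; [simpl; lra|].
  change ((s + u) ^ S (S n)) with ((s + u) * (s + u) ^ S n).
  change (s ^ S (S n)) with (s * s ^ S n) in *; change (s ^ S n) with (s * s ^ n) in *.
  assert (0 <= s ^ n) by (apply pow_le; auto).
  assert (0 <= INR (S n)) by apply pos_INR.
  rewrite S_INR; apply Rle_trans with ((s + u) * (s * s ^ n + INR (S n) * u * s ^ n)).
  - assert (0 <= INR (S n) * (u * u) * s ^ n) by (repeat apply Rmult_le_pos; nra). nra.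
  - apply Rmult_le_compat_l; lra.
Qed.

Lemma tail_sum_telescope mu N a : (forall x, 0 <= mu x) ->
  forall c, sumR (fun x => mu x * tail_sum mu N (S x) ^ a) (seq c (N - c))
            <= tail_sum mu N c ^ S a / INR (S a).
Proof.
  intros Hmu c; remember (N - c)%nat as n eqn:E; revert c E.
  induction n as [|n IH]; intros c E.
  - unfold tail_sum, sumR; rewrite <- E; simpl; unfold Rdiv; rewrite !Rmult_0_l; lra.
  - change (sumR ?f (seq c (S n))) with (f c + sumR f (seq (S c) n)); cbv beta.
    rewrite (tail_sum_step mu N c) by lia.
    set (s := tail_sum mu N (S c)).
    assert (Hs : 0 <= s) by (apply sumR_nonneg; auto).
    assert (Ha : 0 < INR (S a)) by (apply lt_0_INR; lia).
    pose proof (pow_add_lower s (mu c) a Hs (Hmu c)).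
    specialize (IH (S c) ltac:(lia)); fold s in IH.
    apply Rle_trans with (mu c * s ^ a + s ^ S a / INR (S a)); [lra|].
    rewrite (Rplus_comm (mu c) s); apply Rmult_le_reg_r with (INR (S a)); auto.
    unfold Rdiv; rewrite Rmult_plus_distr_r, !Rmult_assoc, Rinv_l; [nra | lra].
Qed.

Section MaskBound.

Variables (mu : nat -> R) (N : nat) (K : R).
Hypothesis mu_nonneg : forall x, 0 <= mu x.
Hypothesis K_nonneg : 0 <= K.
Hypothesis partial_sum_le : sumR mu (seq 0 N) <= K.

Definition mask_weight (m : list bool) (c : nat) : R :=
  K ^ (length m - n_marked m) * tail_sum mu N c ^ n_marked m / INR (fact (n_marked m)).

Lemma mask_weight_nonneg m c : 0 <= mask_weight m c.
Proof.
  unfold mask_weight, Rdiv; repeat apply Rmult_le_pos; try (apply pow_le; auto).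
  - apply sumR_nonneg; auto.
  - left; apply Rinv_0_lt_compat, INR_fact_lt_0.
Qed.

Lemma mask_weight_marked m c :
  sumR (fun x => mu x * mask_weight m (S x)) (seq c (N - c)) <= mask_weight (true :: m) c.
Proof.
  unfold mask_weight; change (n_marked (true :: m)) with (S (n_marked m)); cbn [length].
  set (a := n_marked m); set (D := K ^ (length m - a) / INR (fact a)).
  apply Rle_trans with (sumR (fun x => mu x * tail_sum mu N (S x) ^ a) (seq c (N - c)) * D).
  { rewrite <- sumR_mult_r; apply sumR_le; intros x.
    right; unfold D; field; apply INR_fact_neq_0. }
  apply Rle_trans with (tail_sum mu N c ^ S a / INR (S a) * D).
  - apply Rmult_le_compat_r; [|apply tail_sum_telescope; auto].
    unfold D, Rdiv; apply Rmult_le_pos; [apply pow_le; auto|].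
    left; apply Rinv_0_lt_compat, INR_fact_lt_0.
  - right; unfold D; rewrite fact_simpl, mult_INR. cbn [Nat.sub]; field.
    split; [apply INR_fact_neq_0 | apply not_0_INR; lia].
Qed.

Lemma mask_weight_free m c :
  sumR (fun x => mu x * mask_weight m c) (seq 0 N) <= mask_weight (false :: m) c.
Proof.
  rewrite sumR_mult_r; apply Rle_trans with (K * mask_weight m c).
  - apply Rmult_le_compat_r; [apply mask_weight_nonneg | exact partial_sum_le].
  - right; unfold mask_weight; change (n_marked (false :: m)) with (n_marked m); cbn [length].
    pose proof (n_marked_le m).
    replace (S (length m) - n_marked m)%nat with (S (length m - n_marked m)) by lia.
    simpl; field; apply INR_fact_neq_0.
Qed.

Lemma lsum_fits_le m : forall c l, NoDup l -> (forall k, In k l -> fits N m c k) ->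
  lsum mu l <= mask_weight m c.
Proof.
  induction m as [|[|] m IH]; intros c l Hnd Hl.
  - (* only the empty multi-index fits the empty mask *)
    destruct l as [|k [|k' l]]; unfold lsum; simpl; [apply mask_weight_nonneg| |].
    + pose proof (Hl k (or_introl eq_refl)) as Hk; destruct k; [|contradiction].
      unfold mask_weight, lam_dk; simpl; lra.
    + exfalso; inversion Hnd as [|? ? Hk]; subst; apply Hk; left.
      pose proof (Hl k (or_introl eq_refl)); pose proof (Hl k' (or_intror (or_introl eq_refl))).
      destruct k, k'; simpl in *; tauto.
  - eapply Rle_trans; [|apply mask_weight_marked].
    apply (lsum_split_heads mu (fun x k' => fits N m (S x) k')); auto.
    intros [|x k'] Hk; specialize (Hl _ Hk); simpl in Hl; [tauto|].
    exists x, k'; repeat split; try tauto; apply in_seq; lia.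
  - eapply Rle_trans; [|apply mask_weight_free].
    apply (lsum_split_heads mu (fun _ k' => fits N m c k')); auto.
    intros [|x k'] Hk; specialize (Hl _ Hk); simpl in Hl; [tauto|].
    exists x, k'; repeat split; try tauto; apply in_seq; lia.
Qed.

Lemma mask_weight_le m : mask_weight m 0 <= K ^ length m / INR (fact (n_marked m)).
Proof.
  unfold mask_weight, Rdiv; apply Rmult_le_compat_r.
  { left; apply Rinv_0_lt_compat, INR_fact_lt_0. }
  pose proof (n_marked_le m).
  replace (K ^ length m) with (K ^ (length m - n_marked m) * K ^ n_marked m)
    by (rewrite <- pow_add; f_equal; lia).
  apply Rmult_le_compat_l; [apply pow_le; auto|].
  apply pow_incr; split; [apply sumR_nonneg; auto|].
  unfold tail_sum; rewrite Nat.sub_0_r; exact partial_sum_le.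
Qed.

End MaskBound.

Lemma fits_intro N m : forall k c, length k = length m ->
  (forall i j, (i < j)%nat -> (j < length m)%nat ->
     nth i m false = true -> nth j m false = true -> (nth i k 0 < nth j k 0)%nat) ->
  (forall i, (i < length m)%nat -> nth i m false = true -> (c <= nth i k 0)%nat) ->
  (forall x, In x k -> (x < N)%nat) -> fits N m c k.
Proof.
  induction m as [|b m IH]; intros [|x k] c Hlen Hinc Hc HN; simpl in *;
    try discriminate; auto.
  split; [auto|].
  assert (Hinc' : forall i j, (i < j)%nat -> (j < length m)%nat ->
     nth i m false = true -> nth j m false = true -> (nth i k 0 < nth j k 0)%nat)
    by (intros i j ? ?; apply (Hinc (S i) (S j)); lia).
  destruct b.
  - split; [apply (Hc 0%nat); auto; lia|].
    apply IH; auto; intros i ? ?; apply (Hinc 0%nat (S i)); auto; lia.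
  - apply IH; auto; intros i ? ?; apply (Hc (S i)); auto; lia.
Qed.

Lemma nth_mask (f : nat -> bool) d i : (i < d)%nat -> nth i (map f (seq 0 d)) false = f i.
Proof.
  intros Hi; rewrite nth_indep with (d' := f 0%nat) by (rewrite length_map, length_seq; auto).
  rewrite map_nth, seq_nth; auto.
Qed.

Lemma nabla_fits I d N k : in_nabla_A I d k -> (forall x, In x k -> (x < N)%nat) ->
  fits N (map (I d) (seq 0 d)) 0 k.
Proof.
  intros [Hlen Hinc] HN; apply fits_intro; rewrite ?length_map, ?length_seq; auto.
  - intros i j ? ?; rewrite !nth_mask by lia; auto.
  - intros; lia.
Qed.

Lemma n_marked_mask I d : n_marked (map (I d) (seq 0 d)) = a_card I d.
Proof.
  unfold n_marked, a_card; rewrite filter_map_swap, length_map; reflexivity.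
Qed.

Lemma max_list_ge s x : In x s -> (x <= fold_right max 0 s)%nat.
Proof.
  induction s as [|y s IH]; simpl; [intros []|].
  intros [<-|H]; [lia | specialize (IH H); lia].
Qed.

Lemma lsum_nabla_le mu K I d l : (forall x, 0 <= mu x) -> 0 <= K ->
  (forall N, sumR mu (seq 0 N) <= K) ->
  NoDup l -> (forall k, In k l -> in_nabla_A I d k) ->
  lsum mu l <= K ^ d / INR (fact (a_card I d)).
Proof.
  intros Hmu HK HN Hnd Hl.
  set (N := S (fold_right max 0%nat (map (fold_right max 0%nat) l))).
  set (m := map (I d) (seq 0 d)).
  replace (K ^ d / INR (fact (a_card I d))) with (K ^ length m / INR (fact (n_marked m)))
    by (unfold m; rewrite n_marked_mask, length_map, length_seq; reflexivity).
  eapply Rle_trans; [|apply (mask_weight_le mu N); auto].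
  apply lsum_fits_le; auto.
  intros k Hk; apply nabla_fits; auto.
  intros x Hx; unfold N; apply Nat.lt_succ_r.
  apply Nat.le_trans with (fold_right max 0%nat k); [now apply max_list_ge|].
  apply max_list_ge, in_map; exact Hk.
Qed.

Lemma lsum_ge_count mu e l : (forall k, In k l -> e <= lam_dk mu k) ->
  INR (length l) * e <= lsum mu l.
Proof.
  unfold lsum; induction l as [|k l IH]; intros Hl; cbn [length map fold_right]; [simpl; lra|].
  rewrite S_INR; specialize (IH (fun k' Hk' => Hl k' (or_intror Hk'))).
  specialize (Hl k (or_introl eq_refl)); lra.
Qed.

Lemma rpow_nonneg x t : 0 <= rpow x t.
Proof. unfold rpow; destruct (Req_EM_T x 0); [lra|]. left; apply exp_pos. Qed.

Lemma lam_dk_rpow lam tau k : (forall x, 0 <= lam x) -> 0 < lam_dk lam k ->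
  lam_dk (fun x => rpow (lam x) tau) k = Rpower (lam_dk lam k) tau.
Proof.
  unfold lam_dk; intros Hlam; induction k as [|x k IH]; intros Hp; simpl in *.
  - unfold Rpower; rewrite ln_1, Rmult_0_r, exp_0; reflexivity.
  - set (P := fold_right Rmult 1 (map lam k)) in *.
    assert (0 <= P) by (unfold P; clear - Hlam; induction k; simpl; [lra|];
                        apply Rmult_le_pos; auto).
    pose proof (Hlam x).
    assert (lam x <> 0) by (intros E; rewrite E in Hp; lra).
    assert (0 < P) by (destruct (Rle_lt_or_eq_dec 0 P); auto; subst; nra).
    rewrite IH by lra; unfold rpow; destruct (Req_EM_T (lam x) 0); [contradiction|].
    apply Rpower_mult_distr; lra.
Qed.

Lemma partial_sum_le_series mu L : (forall x, 0 <= mu x) -> infinite_sum mu L ->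
  forall N, sumR mu (seq 0 N) <= L.
Proof.
  intros Hmu Hs.
  assert (Hg : forall n, sum_f_R0 mu n <= L)
    by (apply growing_ineq; [intros n; simpl; specialize (Hmu (S n)); lra | exact Hs]).
  assert (Hsum : forall n, sumR mu (seq 0 (S n)) = sum_f_R0 mu n).
  { intros n; induction n as [|n IH]; [unfold sumR; simpl; ring|].
    rewrite seq_S, sumR_app, IH; unfold sumR; simpl; ring. }
  intros [|N]; [|rewrite Hsum; apply Hg].
  unfold sumR; simpl; specialize (Hg 0%nat); specialize (Hmu 0%nat); simpl in Hg; lra.
Qed.

Lemma ltau_pow_ge_first lam tau L : (forall x, 0 <= lam x) -> 0 < lam 0%nat ->
  ltau_pow lam tau L -> Rpower (lam 0%nat) tau <= L.
Proof.
  intros Hlam H0 HL.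
  pose proof (partial_sum_le_series _ _ (fun x => rpow_nonneg (lam x) tau) HL 1%nat) as H.
  unfold sumR, rpow in H; simpl in H; destruct (Req_EM_T (lam 0%nat) 0); lra.
Qed.

Lemma spt_of_bounded_weights lam I tau K C : (forall x, 0 <= lam x) -> 0 < tau -> 0 < C ->
  0 <= K -> (forall N, sumR (fun x => rpow (lam x) tau) (seq 0 N) <= K) ->
  (forall d, (1 <= d)%nat -> K ^ d / INR (fact (a_card I d)) <= C) ->
  strongly_poly_tractable lam I.
Proof.
  intros Hlam Htau HC HK HN HD; exists C, (2 * tau); split; [auto | split; [lra|]].
  intros d eps Hd He He1 l Hnd Hl.
  set (mu := fun x => rpow (lam x) tau).
  assert (HE : 0 < Rpower eps (2 * tau)) by apply exp_pos.
  assert (Hup : lsum mu l <= C).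
  { eapply Rle_trans; [|apply (HD d Hd)].
    apply lsum_nabla_le; auto; [intros; apply rpow_nonneg | intros k Hk; apply Hl, Hk]. }
  (* each admissible k contributes lambda_{d,k}^tau > eps^(2 tau) *)
  assert (Hlow : INR (length l) * Rpower eps (2 * tau) <= lsum mu l).
  { apply lsum_ge_count; intros k Hk; destruct (Hl k Hk) as [_ Hgt].
    assert (0 < eps ^ 2) by (apply pow_lt; auto).
    unfold mu; rewrite lam_dk_rpow by (auto; lra).
    replace (Rpower eps (2 * tau)) with (Rpower (eps ^ 2) tau)
      by (rewrite <- Rpower_pow, Rpower_mult by lra; f_equal; simpl; ring).
    left; apply Rlt_Rpower_l; auto; lra. }
  rewrite Rpower_Ropp; apply Rmult_le_reg_r with (Rpower eps (2 * tau)); auto.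
  rewrite Rmult_assoc, Rinv_l; lra.
Qed.

Lemma INR_fact_ge_1 n : 1 <= INR (fact n).
Proof. rewrite <- INR_1; apply le_INR, lt_O_fact. Qed.

Lemma div_fact_le x c n : x <= c * INR (fact n) -> x / INR (fact n) <= c.
Proof.
  intros H; pose proof (INR_fact_lt_0 n).
  apply Rmult_le_reg_r with (INR (fact n)); auto.
  unfold Rdiv; rewrite Rmult_assoc, Rinv_l; lra.
Qed.

Lemma rpower_small_enough q L : 0 < q < 1 -> 0 < L -> exists t, 0 <= t /\ L * Rpower q t <= 1.
Proof.
  intros [Hq0 Hq1] HL.
  destruct (Rle_or_lt L 1) as [HL1|HL1].
  - exists 0; rewrite Rpower_O by lra; lra.
  - assert (Hlnq : ln q < 0) by (rewrite <- ln_1; apply ln_increasing; lra).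
    assert (HlnL : 0 < ln L) by (rewrite <- ln_1; apply ln_increasing; lra).
    exists (ln L / - ln q); split.
    + unfold Rdiv; apply Rmult_le_pos; [lra | left; apply Rinv_0_lt_compat; lra].
    + unfold Rpower; replace (ln L / - ln q * ln q) with (- ln L) by (field; lra).
      rewrite exp_Ropp, exp_ln by lra; right; field; lra.
Qed.

(* Raising the exponent from [tau] to [tau + t] multiplies each [lambda_x^tau]
   by at most [lambda_1^t], since [lambda] is nonincreasing. *)
Lemma partial_sum_shift lam tau t L : (forall x, 0 <= lam x) ->
  (forall m, lam (S m) <= lam m) -> 0 <= t -> ltau_pow lam tau L ->
  forall N, sumR (fun x => rpow (lam x) (tau + t)) (seq 0 N) <= L * Rpower (lam 0%nat) t.
Proof.
  intros Hlam Hdec Ht HL N.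
  assert (Hmono : forall x, lam x <= lam 0%nat)
    by (induction x; [lra | specialize (Hdec x); lra]).
  apply Rle_trans with (sumR (fun x => rpow (lam x) tau * Rpower (lam 0%nat) t) (seq 0 N)).
  - apply sumR_le; intros x; unfold rpow; destruct (Req_EM_T (lam x) 0); [lra|].
    rewrite Rpower_plus; apply Rmult_le_compat_l; [left; apply exp_pos|].
    apply Rle_Rpower_l; auto; specialize (Hlam x); split; [lra | auto].
  - rewrite sumR_mult_r; apply Rmult_le_compat_r; [left; apply exp_pos|].
    apply (partial_sum_le_series _ _ (fun x => rpow_nonneg (lam x) tau) HL).
Qed.

Lemma spt_lambda1_lt_1 lam I tau0 L0 : (forall x, 0 <= lam x) ->
  (forall m, lam (S m) <= lam m) -> 0 < lam 0%nat -> lam 0%nat < 1 ->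
  0 < tau0 -> ltau_pow lam tau0 L0 -> strongly_poly_tractable lam I.
Proof.
  intros Hlam Hdec Hl0 Hl1 Htau0 HL0.
  assert (HL0pos : 0 < L0).
  { pose proof (ltau_pow_ge_first _ _ _ Hlam Hl0 HL0).
    pose proof (exp_pos (tau0 * ln (lam 0%nat))); unfold Rpower in *; lra. }
  destruct (rpower_small_enough (lam 0%nat) L0) as (t & Ht & HK1); auto.
  set (K := L0 * Rpower (lam 0%nat) t) in HK1.
  assert (HK0 : 0 <= K) by (apply Rmult_le_pos; [lra | left; apply exp_pos]).
  apply (spt_of_bounded_weights lam I (tau0 + t) K 1); auto; try lra.
  - apply partial_sum_shift; auto.
  - intros d _; apply div_fact_le.
    assert (K ^ d <= 1) by (rewrite <- (pow1 d); apply pow_incr; lra).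
    pose proof (INR_fact_ge_1 (a_card I d)); lra.
Qed.

Lemma pow_le_of_ln_div L F d : 0 < L -> 0 < F -> (0 < d)%nat ->
  ln F / INR d >= ln L -> L ^ d <= F.
Proof.
  intros HL HF Hd Hcond.
  assert (Hdpos : 0 < INR d) by (apply lt_0_INR; lia).
  assert (Hln : ln (L ^ d) <= ln F).
  { rewrite ln_pow by lra; apply Rge_le in Hcond.
    apply Rmult_le_compat_r with (r := INR d) in Hcond; [|lra].
    unfold Rdiv in Hcond; rewrite Rmult_assoc, Rinv_l, Rmult_1_r in Hcond by lra; lra. }
  destruct (Rle_or_lt (L ^ d) F) as [|Hlt]; auto.
  pose proof (ln_increasing F (L ^ d) HF Hlt); lra.
Qed.

Lemma spt_factorial_growth lam I tau L d0 : (forall x, 0 <= lam x) -> 1 <= lam 0%nat ->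
  0 < tau -> ltau_pow lam tau L ->
  (forall d, (1 <= d)%nat -> (d0 <= d)%nat -> ln (INR (fact (a_card I d))) / INR d >= ln L) ->
  strongly_poly_tractable lam I.
Proof.
  intros Hlam Hl0 Htau HL Hcond.
  assert (HL1 : 1 <= L).
  { eapply Rle_trans; [|apply (ltau_pow_ge_first _ _ _ Hlam ltac:(lra) HL)].
    rewrite <- (Rpower_O (lam 0%nat)) by lra; apply Rle_Rpower; lra. }
  pose proof (Rmax_l 1 (L ^ d0)); pose proof (Rmax_r 1 (L ^ d0)).
  apply (spt_of_bounded_weights lam I tau L (Rmax 1 (L ^ d0))); auto; try lra.
  - apply (partial_sum_le_series _ _ (fun x => rpow_nonneg (lam x) tau) HL).
  - intros d Hd; apply div_fact_le.
    pose proof (INR_fact_ge_1 (a_card I d)).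
    destruct (le_lt_dec d0 d) as [Hle|Hlt].
    + assert (L ^ d <= INR (fact (a_card I d)))
        by (apply pow_le_of_ln_div; auto; lra).
      nra.
    + assert (L ^ d <= L ^ d0) by (apply Rle_pow; [lra | lia]).
      nra.
Qed.

Theorem proposition6 (lam : nat -> R) (I : nat -> nat -> bool) (tau0 : R) :
  (* eigenvalues: nonnegative, nonincreasing *)
  (forall m, 0 <= lam m) ->
  (forall m, lam (S m) <= lam m) ->
  (* admissible index sets I_d *)
  admissible_I I ->
  (* standing assumptions: lambda_2 > 0, initial errors positive *)
  0 < lam 1%nat ->
  (forall d, (1 <= d)%nat -> 0 < init_err_A lam I d) ->
  (* lambda in l_{tau0}, tau0 in (0, oo) *)
  0 < tau0 -> in_ltau lam tau0 ->
  (* (i) *)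
  (lam 0%nat < 1 -> strongly_poly_tractable lam I) /\
  (* (ii) *)
  (1 <= lam 0%nat ->
   (exists tau L d0, tau0 <= tau /\ ltau_pow lam tau L /\
      forall d, (1 <= d)%nat -> (d0 <= d)%nat ->
        ln (INR (fact (a_card I d))) / INR d >= ln L) ->
   strongly_poly_tractable lam I).
Proof.
  intros Hlam Hdec _ Hl1 _ Htau0 [L0 HL0].
  assert (Hl0 : 0 < lam 0%nat) by (specialize (Hdec 0%nat); lra).
  split.
  - intros Hlt1; exact (spt_lambda1_lt_1 lam I tau0 L0 Hlam Hdec Hl0 Hlt1 Htau0 HL0).
  - intros Hge1 (tau & L & d0 & Htau & HL & Hcond).
    apply (spt_factorial_growth lam I tau L d0); auto; lra.
Qed.
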